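(* Let $a,b,d$ be positive integers with $d$ not a perfect square, and let $\varepsilon=(t+u\sqrt d)/2\ne\pm1$, with $t,u$ integers, be a unit of the ring of integers of $\mathbb{Q}(\sqrt d)$. Define $x_k,y_k$ for $k\ge0$ by $x_k+y_k\sqrt d=(a+b\sqrt d)\varepsilon^k$. If $x_k$ and $y_k$ are both integers and $\gcd(a,b)$ is odd, then $\gcd(x_k,y_k)/\gcd(a,b)\in\{1,2\}$. *)

From mathcomp Require Import all_boot all_order all_algebra.
Set Implicit Arguments. Unset Strict Implicit. Unset Printing Implicit Defensive.
Import Order.TTheory GRing.Theory Num.Theory.
Local Open Scope ring_scope.

(* Elements x + y sqrt d of Q(sqrt d) (d not a square) are represented by
   the pair (x, y) : rat * rat; this representation is unique. *)

(* Multiplication by eps = (t + u sqrt d)/2 :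
   (x + y sqrt d)(t + u sqrt d)/2 = (x t + d y u)/2 + ((x u + y t)/2) sqrt d *)
Definition mul_eps (d t u : int) (p : rat * rat) : rat * rat :=
  ((p.1 * t%:~R + d%:~R * p.2 * u%:~R) / 2%:R,
   (p.1 * u%:~R + p.2 * t%:~R) / 2%:R).

Definition xy_seq (a b d : nat) (t u : int) (k : nat) : rat * rat :=
  iter k (mul_eps d%:Z t u) (a%:R, b%:R).

(* eps = (t + u sqrt d)/2 (t, u integers) is a unit of the ring of integers of
   Q(sqrt d): its norm (t^2 - d u^2)/4 is +-1. *)
Definition is_quad_unit (d : nat) (t u : int) : Prop :=
  t ^+ 2 - d%:Z * u ^+ 2 = 4 \/ t ^+ 2 - d%:Z * u ^+ 2 = -4.

From mathcomp Require Import all_boot all_order all_algebra zify ring.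
Set Implicit Arguments. Unset Strict Implicit. Unset Printing Implicit Defensive.
Import Order.TTheory GRing.Theory Num.Theory.
Local Open Scope ring_scope.

(* Write eps^k = (s + v sqrt d)/2.  The integer pairs (s, v) of norm
   s^2 - d v^2 = +-4 are closed under the halved product, so s and v stay
   integers and 2 (x_k, y_k) = (a s + d b v, a v + b s).  Hence gcd(a, b)
   divides 2 gcd(x_k, y_k); multiplying back by the conjugate (s - v sqrt d)/2
   gives 2 (a, b) = +-(s x_k - d v y_k, s y_k - v x_k), so gcd(x_k, y_k)
   divides 2 gcd(a, b).  When gcd(a, b) is odd, the two divisibilities leave
   only the ratios 1 and 2. *)

Lemma sqrz_sub_even (x : int) : (2 %| x ^+ 2 - x)%Z.
Proof.
apply/dvdzP; have := divz_eq x 2; have := modz_ge0 x (isT : 2 != 0 :> int).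
have := ltz_mod x (isT : 2 != 0 :> int).
set q := (x %/ 2)%Z; set r := (x %% 2)%Z => r_lt2 r_ge0 ->.
have [->| ->] : r = 0 \/ r = 1 by lia.
- by exists (2 * q ^+ 2 - q); ring.
- by exists (2 * q ^+ 2 + q); ring.
Qed.

Section QuadUnits.

Variable d : nat.

Lemma quad_unit_parity (t u : int) :
  is_quad_unit d t u -> (2 %| t - d%:Z * u)%Z.
Proof.
move=> unit_tu.
have norm_even : (2 %| t ^+ 2 - d%:Z * u ^+ 2)%Z.
  by case: unit_tu => ->; apply/dvdzP; [exists 2 | exists (-2)].
have -> : t - d%:Z * u =
          (t ^+ 2 - d%:Z * u ^+ 2) - (t ^+ 2 - t) + d%:Z * (u ^+ 2 - u) by ring.
by rewrite rpredD ?dvdz_mull ?sqrz_sub_even // rpredB ?sqrz_sub_even.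
Qed.

Lemma quad_unit_mul (s v t u : int) :
  is_quad_unit d s v -> is_quad_unit d t u ->
  exists s' v', [/\ 2 * s' = s * t + d%:Z * v * u, 2 * v' = s * u + v * t
                  & is_quad_unit d s' v'].
Proof.
move=> unit_sv unit_tu.
have par_sv := quad_unit_parity unit_sv; have par_tu := quad_unit_parity unit_tu.
have d2_even : (2 %| d%:Z ^+ 2 - d%:Z)%Z by exact: sqrz_sub_even.
have /dvdzP[s' Es'] : (2 %| s * t + d%:Z * v * u)%Z.
  have -> : s * t + d%:Z * v * u = s * (t - d%:Z * u) + d%:Z * u * (s - d%:Z * v)
            + u * v * (d%:Z ^+ 2 - d%:Z) + 2 * (d%:Z * u * v) by ring.
  by rewrite !rpredD ?(dvdz_mull _ par_sv, dvdz_mull _ par_tu, dvdz_mull _ d2_even)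
             ?(dvdz_mulr _ (dvdzz 2)).
have /dvdzP[v' Ev'] : (2 %| s * u + v * t)%Z.
  have -> : s * u + v * t =
            u * (s - d%:Z * v) + v * (t - d%:Z * u) + 2 * (d%:Z * u * v) by ring.
  by rewrite !rpredD ?(dvdz_mull _ par_sv, dvdz_mull _ par_tu) ?(dvdz_mulr _ (dvdzz 2)).
exists s', v'; split; rewrite ?(mulrC 2) //.
have norm_mul : 4 * (s' ^+ 2 - d%:Z * v' ^+ 2) =
                (s ^+ 2 - d%:Z * v ^+ 2) * (t ^+ 2 - d%:Z * u ^+ 2).
  have -> : 4 * (s' ^+ 2 - d%:Z * v' ^+ 2) =
            (s' * 2) ^+ 2 - d%:Z * (v' * 2) ^+ 2 by ring.
  by rewrite -Es' -Ev'; ring.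
by case: unit_sv unit_tu norm_mul => -> [] -> ?; [left|right|right|left]; lia.
Qed.

End QuadUnits.

Lemma mul_eps1 (d : int) (p : rat * rat) : mul_eps d 2 0 p = p.
Proof. by case: p => x y; rewrite /mul_eps /=; congr (_, _); field. Qed.

Lemma mul_eps_comp (d s v t u s' v' : int) (p : rat * rat) :
  2 * s' = s * t + d * v * u -> 2 * v' = s * u + v * t ->
  mul_eps d t u (mul_eps d s v p) = mul_eps d s' v' p.
Proof.
move=> /(congr1 (intr : int -> rat)) Es' /(congr1 (intr : int -> rat)) Ev'.
rewrite !rmorphD !rmorphM /= in Es' Ev'; rewrite /mul_eps /=.
have -> : s'%:~R = (s%:~R * t%:~R + d%:~R * v%:~R * u%:~R) / 2 :> rat.
  by rewrite -Es'; field.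
have -> : v'%:~R = (s%:~R * u%:~R + v%:~R * t%:~R) / 2 :> rat.
  by rewrite -Ev'; field.
by congr (_, _); field.
Qed.

Lemma xy_seq_mul_eps (a b d : nat) (t u : int) (k : nat) :
  is_quad_unit d t u ->
  exists s v, is_quad_unit d s v /\ xy_seq a b d t u k = mul_eps d s v (a%:R, b%:R).
Proof.
move=> unit_tu; elim: k => [|k [s [v [unit_sv IHk]]]].
  by exists 2, 0; split; [left; ring | rewrite mul_eps1].
have [s' [v' [Es' Ev' unit_sv']]] := quad_unit_mul unit_sv unit_tu.
exists s', v'; split => //.
by rewrite /xy_seq iterS -/(xy_seq a b d t u k) IHk (mul_eps_comp _ Es' Ev').
Qed.

Lemma mul_eps_intE (d a b s v X Y : int) :
  mul_eps d s v (a%:~R, b%:~R) = (X%:~R, Y%:~R) ->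
  2 * X = a * s + d * b * v /\ 2 * Y = a * v + b * s.
Proof.
by case=> EX EY; split; apply: (@intr_inj rat);
  rewrite !rmorphD !rmorphM /= -?EX -?EY; field.
Qed.

Lemma gcdz_dvd_half_mul (d a b s v X Y : int) :
  2 * X = a * s + d * b * v -> 2 * Y = a * v + b * s ->
  (gcdz a b %| 2 * gcdz X Y)%Z.
Proof.
move=> EX EY; rewrite -[2]/(`|2|%:Z) mulz_gcdr dvdz_gcd EX EY.
have ga := dvdz_gcdl a b; have gb := dvdz_gcdr a b.
by rewrite !rpredD ?(dvdz_mulr _ ga, dvdz_mulr _ gb, dvdz_mulr _ (dvdz_mull _ gb)).
Qed.

Lemma half_mul_conj (d a b s v X Y : int) :
  2 * X = a * s + d * b * v -> 2 * Y = a * v + b * s ->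
  2 * (s * X - d * v * Y) = (s ^+ 2 - d * v ^+ 2) * a /\
  2 * (s * Y - v * X) = (s ^+ 2 - d * v ^+ 2) * b.
Proof.
move=> EX EY; split.
- have -> : 2 * (s * X - d * v * Y) = s * (2 * X) - d * v * (2 * Y) by ring.
  by rewrite EX EY; ring.
- have -> : 2 * (s * Y - v * X) = s * (2 * Y) - v * (2 * X) by ring.
  by rewrite EX EY; ring.
Qed.

Lemma gcdz_half_mul_dvd (d : nat) (a b s v X Y : int) :
  is_quad_unit d s v ->
  2 * X = a * s + d%:Z * b * v -> 2 * Y = a * v + b * s ->
  (gcdz X Y %| 2 * gcdz a b)%Z.
Proof.
move=> unit_sv EX EY; have [Ea Eb] := half_mul_conj EX EY.
have gX := dvdz_gcdl X Y; have gY := dvdz_gcdr X Y.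
have dvd_double (c P : int) : (gcdz X Y %| P)%Z ->
    2 * P = (s ^+ 2 - d%:Z * v ^+ 2) * c -> (gcdz X Y %| 2 * c)%Z.
  case: unit_sv => -> gP EP.
  - by have -> : 2 * c = P by lia.
  - have -> : 2 * c = - P by lia.
    by rewrite rpredN.
rewrite -[2]/(`|2|%:Z) mulz_gcdr dvdz_gcd.
by rewrite (dvd_double _ _ _ Ea) ?(dvd_double _ _ _ Eb) // rpredB ?dvdz_mull.
Qed.

Lemma odd_dvdn_double_antisym (g G : nat) :
  odd g -> (g %| 2 * G)%N -> (G %| 2 * g)%N -> G = g \/ G = (2 * g)%N.
Proof.
move=> odd_g; rewrite Gauss_dvdr ?coprimen2 // => /dvdnP[m ->].
have g_gt0 : (0 < g)%N by case: g odd_g.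
rewrite -{2}[g]mul1n mulnA dvdn_pmul2r // => m_dvd2.
have := dvdn_leq (isT : (0 < 2)%N) m_dvd2.
by case: m m_dvd2 => [|[|[|]]] //; [left|right]; rewrite ?mul1n.
Qed.

Theorem lemma3p10 (a b d : nat) (t u : int) :
  (0 < a)%N -> (0 < b)%N -> (0 < d)%N ->
  (forall m : nat, (m * m)%N <> d) ->
  is_quad_unit d t u ->
  ~ (u = 0 /\ (t = 2 \/ t = -2)) ->
  forall (k : nat) (X Y : int),
    xy_seq a b d t u k = (X%:~R, Y%:~R) ->
    odd (gcdn a b) ->
    gcdz X Y = (gcdn a b)%:Z \/ gcdz X Y = (2 * gcdn a b)%N%:Z.
Proof.
move=> _ _ _ _ unit_tu _ k X Y Exy odd_g.
have [s [v [unit_sv Eseq]]] := xy_seq_mul_eps a b k unit_tu.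
rewrite Eseq in Exy; have [EX EY] := mul_eps_intE (a := a) (b := b) Exy.
have g_dvd := gcdz_dvd_half_mul EX EY.
have G_dvd := gcdz_half_mul_dvd unit_sv EX EY.
rewrite !dvdzE !abszM natz /= in g_dvd G_dvd.
by rewrite /gcdz; case: (odd_dvdn_double_antisym odd_g g_dvd G_dvd) => ->; [left|right].
Qed.
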